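(* Let $K$ be an algebraically closed field of characteristic zero, $\deg_1$ a positive weighted homogeneous degree on $K[x_1,\dots,x_n]$, and $R\in K[x_1,\dots,x_n]\setminus K$ an irreducible $\deg_1$-homogeneous polynomial. If there exists a nonzero locally nilpotent derivation $D$ of $K[x_1,\dots,x_n]$ with $D(R)=0$, then the quotient ring $K[x_1,\dots,x_n]/(R)$ admits a nonzero weighted homogeneous locally nilpotent derivation.
   Context: A p.w.h. degree assigns positive real weights to the variables; the quotient is graded accordingly, and a derivation is weighted homogeneous (of degree $r$) if it maps homogeneous elements of degree $m$ to homogeneous elements of degree $m+r$. *)

From HB Require Import structures.
From Stdlib Require Import ClassicalEpsilon.
From Stdlib Require Rdefinitions Raxioms.
From mathcomp Require Import all_boot all_algebra.
From mathcomp Require Import ring_quotient generic_quotient.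
From mathcomp.multinomials Require Import mpoly.

Set Implicit Arguments.
Unset Strict Implicit.
Unset Printing Implicit Defensive.

Import GRing.Theory.
Local Open Scope ring_scope.

Definition asb (P : Prop) : bool :=
  if excluded_middle_informative P then true else false.

Lemma asbP (P : Prop) : reflect P (asb P).
Proof. by rewrite /asb; case: excluded_middle_informative => h; constructor. Qed.

Definition pideal_pred (A : comNzRingType) (r : A) : A -> bool :=
  fun p => if asb (exists q, 1 = r * q) then p == 0 else asb (exists q, p = r * q).

Lemma asbT (P : Prop) : P -> asb P = true.
Proof. by move=> h; apply/asbP. Qed.

Lemma asbF (P : Prop) : ~ P -> asb P = false.
Proof. by move=> h; apply/asbP. Qed.

Lemma pideal_closed (A : comNzRingType) (r : A) : idealr_closed (pideal_pred r).
Proof.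
have E : forall p, (p \in pideal_pred r) = pideal_pred r p by [].
case hu: (asb (exists q, 1 = r * q)).
  split.
  - by rewrite E /pideal_pred hu.
  - by rewrite E /pideal_pred hu oner_eq0.
  - by move=> a u v; rewrite !E /pideal_pred hu => /eqP -> /eqP ->; rewrite mulr0 addr0.
split.
- by rewrite E /pideal_pred hu; apply/asbP; exists 0; rewrite mulr0.
- by rewrite E /pideal_pred hu.
- move=> a u v; rewrite !E /pideal_pred hu => /asbP [qu ->] /asbP [qv ->].
  by apply/asbP; exists (a * qu + qv); rewrite mulrDr mulrCA.
Qed.

HB.instance Definition _ (A : comNzRingType) (r : A) :=
  isIdealr.Build A (pideal_pred r) (pideal_closed r).

Definition pideal (A : comNzRingType) (r : A) : idealr A := pideal_pred r.

(* The quotient ring A/(r) by the principal ideal rA.  (In the degenerate case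
   where r is a unit, the zero ideal is used instead so that the library's
   properness requirement holds; this case is excluded in the theorem since
   the polynomial there is irreducible.) *)
Definition quot_by (A : comNzRingType) (r : A) := {ideal_quot (pideal r)}.

Definition qproj (A : comNzRingType) (r : A) : A -> quot_by r :=
  \pi_(quot_by r)%qT.

Notation real := Rdefinitions.R.

Definition wdeg (n : nat) (w : 'I_n -> real) (m : 'X_{1..n}) : real :=
  \big[Rdefinitions.Rplus/Rdefinitions.IZR BinNums.Z0]_(i < n)
     Rdefinitions.Rmult (w i) (Raxioms.INR (m i)).

Definition positive_weights (n : nat) (w : 'I_n -> real) : Prop :=
  forall i, Rdefinitions.Rlt (Rdefinitions.IZR BinNums.Z0) (w i).

(* p is weighted homogeneous of degree d: every monomial of p has weighted
   degree d (the zero polynomial is homogeneous of every degree). *)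
Definition whomog (K : fieldType) (n : nat) (w : 'I_n -> real) (d : real)
  (p : {mpoly K[n]}) : Prop :=
  forall m, m \in msupp p -> wdeg w m = d.

Definition qhomog (K : fieldType) (n : nat) (w : 'I_n -> real)
  (r : {mpoly K[n]}) (d : real) (a : quot_by r) : Prop :=
  exists p, whomog w d p /\ qproj r p = a.

Definition is_derivation (K : fieldType) (A : comNzRingType) (emb : K -> A)
  (D : A -> A) : Prop :=
  [/\ forall a b, D (a + b) = D a + D b,
      forall a b, D (a * b) = a * D b + D a * b
    & forall c, D (emb c) = 0].

Definition locally_nilpotent (A : comNzRingType) (D : A -> A) : Prop :=
  forall a, exists k : nat, iter k D a = 0.

Definition whomog_qder (K : fieldType) (n : nat) (w : 'I_n -> real)
  (r : {mpoly K[n]}) (D : quot_by r -> quot_by r) : Prop :=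
  exists e : real, forall (d : real) (a : quot_by r),
    qhomog w d a -> qhomog w (Rdefinitions.Rplus d e) (D a).

Definition is_unit (A : comNzRingType) (a : A) : Prop := exists b, a * b = 1.

Definition irreducible_elt (A : comNzRingType) (r : A) : Prop :=
  [/\ r != 0, ~ is_unit r
    & forall a b, r = a * b -> is_unit a \/ is_unit b].

From HB Require Import structures.
From Stdlib Require Import Reals Lra Classical FunctionalExtensionality.
From mathcomp Require Import all_boot all_algebra.
From mathcomp Require Import ring_quotient generic_quotient.
From mathcomp.multinomials Require Import mpoly.
From mathcomp Require Import zify.

(* Write D = sum_i g_i d/dx_i.  Let t be the largest value of wdeg m - w_i
   over the monomials m of the g_i, and G_i the component of g_i of weighted
   degree w_i + t.  The leading part D_t = sum_i G_i d/dx_i is a nonzero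
   homogeneous derivation of degree t, and for homogeneous f, D_t^k f is the
   top component of D^k f; hence D_t is locally nilpotent and kills R.
   Factoring the largest common power R^k out of the G_i gives D_t = R^k E,
   where E = sum_i H_i d/dx_i is again homogeneous, locally nilpotent and
   kills R, so E induces a derivation of K[x]/(R); it is nonzero because some
   H_i is not divisible by R. *)

Import GRing.Theory.
Local Open Scope ring_scope.
Set Implicit Arguments.
Unset Strict Implicit.

Lemma Rplus_associative : associative Rplus.
Proof. by move=> x y z; rewrite Rplus_assoc. Qed.

HB.instance Definition _ := Monoid.isComLaw.Build real (IZR BinNums.Z0) Rplus
  Rplus_associative Rplus_comm Rplus_0_l.

Section WeightedDegree.
Variables (n : nat) (w : 'I_n -> real).

Lemma wdegD m1 m2 : wdeg w (m1 + m2)%MM = Rplus (wdeg w m1) (wdeg w m2).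
Proof.
rewrite /wdeg -big_split /=; apply: eq_bigr => i _.
by rewrite mnmDE plus_INR Rmult_plus_distr_l.
Qed.

Lemma wdeg0 : wdeg w 0%MM = IZR BinNums.Z0.
Proof. by rewrite /wdeg big1 // => i _; rewrite mnm0E /= Rmult_0_r. Qed.

Lemma wdegU i : wdeg w U_(i)%MM = w i.
Proof.
rewrite /wdeg (bigD1 i) //= big1 ?mnm1E ?eqxx /=; first by rewrite Rmult_1_r Rplus_0_r.
by move=> j; rewrite mnm1E eq_sym => /negbTE ->; rewrite Rmult_0_r.
Qed.

End WeightedDegree.

Section WeightedParts.
Variables (K : fieldType) (n : nat) (w : 'I_n -> real).
Local Notation P := {mpoly K[n]}.
Local Notation wd := (wdeg w).

Definition whom c (p : P) := forall m, p@_m != 0 -> wd m = c.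
Definition wle c (p : P) := forall m, p@_m != 0 -> Rle (wd m) c.
Definition wlt c (p : P) := forall m, p@_m != 0 -> Rlt (wd m) c.

Lemma whomogP c p : whomog w c p <-> whom c p.
Proof.
split=> h m; first by move=> hm; apply: h; rewrite mcoeff_msupp.
by rewrite mcoeff_msupp; apply: h.
Qed.

Lemma mcoeffD_neq0 (p q : P) m : (p + q)@_m != 0 -> p@_m != 0 \/ q@_m != 0.
Proof. by rewrite mcoeffD; case: (eqVneq p@_m 0) => [->|]; [rewrite add0r; right | left]. Qed.

Lemma mcoeffM_neq0 (p q : P) m : (p * q)@_m != 0 ->
  exists m1 m2, [/\ p@_m1 != 0, q@_m2 != 0 & m = (m1 + m2)%MM].
Proof.
rewrite -mcoeff_msupp => /msuppM_le /allpairsP [[m1 m2] /= [h1 h2 ->]].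
by exists m1, m2; rewrite -!mcoeff_msupp.
Qed.

Lemma mcoeff_mderiv_neq0 (p : P) i m : (p^`M(i))@_m != 0 ->
  p@_(m + U_(i)) != 0 /\ wd m = Rminus (wd (m + U_(i))%MM) (w i).
Proof.
rewrite mcoeff_mderiv => h; split; first by apply: contraNneq h => ->; rewrite mul0rn.
rewrite wdegD wdegU; lra.
Qed.

Lemma whom0 c : whom c 0. Proof. by move=> m; rewrite mcoeff0 eqxx. Qed.
Lemma wlt0 c : wlt c 0. Proof. by move=> m; rewrite mcoeff0 eqxx. Qed.

Lemma whomD c p q : whom c p -> whom c q -> whom c (p + q).
Proof. by move=> hp hq m /mcoeffD_neq0 [/hp|/hq]. Qed.
Lemma wltD c p q : wlt c p -> wlt c q -> wlt c (p + q).
Proof. by move=> hp hq m /mcoeffD_neq0 [/hp|/hq]. Qed.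
Lemma wltN c p : wlt c p -> wlt c (- p).
Proof. by move=> hp m; rewrite mcoeffN oppr_eq0; apply: hp. Qed.

Lemma whomX m : whom (wd m) 'X_[m].
Proof. by move=> u; rewrite mcoeffX; case: (m =P u) => [->|]; rewrite ?eqxx. Qed.

Lemma whom_sum I (r : seq I) (F : I -> P) c :
  (forall i, whom c (F i)) -> whom c (\sum_(i <- r) F i).
Proof. by move=> h; elim/big_ind: _ => //; [apply: whom0 | apply: whomD]. Qed.
Lemma wlt_sum I (r : seq I) (F : I -> P) c :
  (forall i, wlt c (F i)) -> wlt c (\sum_(i <- r) F i).
Proof. by move=> h; elim/big_ind: _ => //; [apply: wlt0 | apply: wltD]. Qed.

Lemma whom_wle c p : whom c p -> wle c p.
Proof. by move=> h m /h ->; apply: Rle_refl. Qed.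

Lemma whom_wlt_eq0 c p : whom c p -> wlt c p -> p = 0.
Proof.
move=> h1 h2; apply/mpolyP => m; rewrite mcoeff0.
case: (eqVneq p@_m 0) => // hm.
by have := h2 _ hm; rewrite (h1 _ hm) => /Rlt_irrefl.
Qed.

Lemma whomM a b p q : whom a p -> whom b q -> whom (Rplus a b) (p * q).
Proof. by move=> hp hq m /mcoeffM_neq0 [m1 [m2 [/hp h1 /hq h2 ->]]]; rewrite wdegD h1 h2. Qed.
Lemma wle_wltM a b p q : wle a p -> wlt b q -> wlt (Rplus a b) (p * q).
Proof. move=> hp hq m /mcoeffM_neq0 [m1 [m2 [/hp h1 /hq h2 ->]]]; rewrite wdegD; lra. Qed.
Lemma wlt_wleM a b p q : wlt a p -> wle b q -> wlt (Rplus a b) (p * q).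
Proof. move=> hp hq m /mcoeffM_neq0 [m1 [m2 [/hp h1 /hq h2 ->]]]; rewrite wdegD; lra. Qed.

Lemma whom_exprn c p k : whom c p -> whom (Rmult (INR k) c) (p ^+ k).
Proof.
move=> hp; elim: k => [|k IH].
  by rewrite expr0 -mpolyX0 Rmult_0_l -(wdeg0 w); apply: whomX.
by rewrite exprSr S_INR Rmult_plus_distr_r Rmult_1_l; apply: whomM.
Qed.

Lemma whom_mderiv c p i : whom c p -> whom (Rminus c (w i)) (p^`M(i)).
Proof. by move=> h m /mcoeff_mderiv_neq0 [/h h1 ->]; rewrite h1. Qed.
Lemma wlt_mderiv c p i : wlt c p -> wlt (Rminus c (w i)) (p^`M(i)).
Proof. move=> h m /mcoeff_mderiv_neq0 [/h h1 ->]; lra. Qed.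

Definition wcomp c (p : P) : P :=
  \sum_(m <- msupp p) (if asb (wd m = c) then p@_m else 0) *: 'X_[m].

Lemma mcoeff_wcomp c p u : (wcomp c p)@_u = if asb (wd u = c) then p@_u else 0.
Proof.
rewrite /wcomp raddf_sum /=.
under eq_bigr => m _ do rewrite mcoeffZ mcoeffX.
case: (boolP (u \in msupp p)) => hu.
  rewrite (bigD1_seq u) ?msupp_uniq //= eqxx mulr1 big1 ?addr0 //.
  by move=> m /negbTE ->; rewrite mulr0.
rewrite big_seq big1; last first.
  move=> m hm; case: (m =P u) => [e|_]; last by rewrite mulr0.
  by move: hu; rewrite -e hm.
by move: hu; rewrite -mcoeff_eq0 => /eqP ->; case: asb.
Qed.

Lemma whom_wcomp c p : whom c (wcomp c p).
Proof. by move=> m; rewrite mcoeff_wcomp; case: asbP => [//|_]; rewrite eqxx. Qed.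

Lemma wcomp_id c p : whom c p -> wcomp c p = p.
Proof.
move=> h; apply/mpolyP => m; rewrite mcoeff_wcomp; case: asbP => // hm.
by case: (eqVneq p@_m 0) => // /h.
Qed.

Lemma wlt_subr_wcomp c p : wle c p -> wlt c (p - wcomp c p).
Proof.
move=> h m; rewrite mcoeffB mcoeff_wcomp; case: asbP => hm; first by rewrite subrr eqxx.
by rewrite subr0 => /h hle; case: (Rle_lt_or_eq_dec _ _ hle) => // /hm.
Qed.

Lemma wcompMl a e r q : whom a r -> wcomp (Rplus e a) (r * q) = r * wcomp e q.
Proof.
move=> hr; apply/mpolyP => u; rewrite mcoeff_wcomp !mcoeffM.
under [RHS]eq_bigr => k _ do rewrite mcoeff_wcomp.
rewrite [LHS](_ : _ = \sum_(k : 'X_{1..n < (mdeg u).+1, (mdeg u).+1} | u == (k.1 + k.2)%MM)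
   (if asb (wd u = Rplus e a) then r@_k.1 * q@_k.2 else 0)); last first.
  by case: asb => //; rewrite big1.
apply: eq_bigr => -[k1 k2] /= /eqP hu.
case: (eqVneq r@_k1 0) => [->|/hr hk]; first by rewrite !mul0r; case: asb.
have -> : asb (wd u = Rplus e a) = asb (wd k2 = e).
  move: (wdegD w k1 k2); rewrite -hu => ->; rewrite hk.
  by case: asbP => h1; case: asbP => h2 //; exfalso; [apply: h2 | apply: h1]; lra.
by case: asb; rewrite ?mulr0.
Qed.

Lemma whom_cancel a b (r q : P) : whom a r -> r != 0 -> whom b (r * q) ->
  whom (Rminus b a) q.
Proof.
move=> hr nr hrq.
have e : b = Rplus (Rminus b a) a by lra.
have := wcompMl (Rminus b a) q hr; rewrite -e wcomp_id // => /mulfI.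
by move=> /(_ nr) ->; apply: whom_wcomp.
Qed.

End WeightedParts.

Section PolynomialDerivations.
Variables (K : fieldType) (n : nat).
Local Notation P := {mpoly K[n]}.

Definition mder (g : 'I_n -> P) (f : P) : P := \sum_i f^`M(i) * g i.

Lemma mderD g f1 f2 : mder g (f1 + f2) = mder g f1 + mder g f2.
Proof. by rewrite /mder -big_split; apply: eq_bigr => i _; rewrite mderivD mulrDl. Qed.

Lemma mderB g f1 f2 : mder g (f1 - f2) = mder g f1 - mder g f2.
Proof. by rewrite /mder -sumrB; apply: eq_bigr => i _; rewrite mderivB mulrBl. Qed.

Lemma mder0 g : mder g 0 = 0.
Proof. by rewrite /mder big1 // => i _; rewrite mderiv0 mul0r. Qed.

Lemma mderZ g c f : mder g (c *: f) = c *: mder g f.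
Proof. by rewrite /mder scaler_sumr; apply: eq_bigr => i _; rewrite mderivZ scalerAl. Qed.

Lemma mderM g f1 f2 : mder g (f1 * f2) = f1 * mder g f2 + mder g f1 * f2.
Proof.
rewrite /mder mulr_sumr mulr_suml -big_split; apply: eq_bigr => i _.
by rewrite mderivM mulrDl addrC mulrA; congr (_ + _); rewrite -!mulrA [_ * f2]mulrC.
Qed.

Lemma mderC g c : mder g c%:MP = 0.
Proof. by rewrite /mder big1 // => i _; rewrite mderivC mul0r. Qed.

Lemma mderX g i : mder g 'X_i = g i.
Proof.
rewrite /mder (bigD1 i) //= big1 ?addr0.
  rewrite mderivX mnm1E eqxx.
  have -> : (U_(i) - U_(i))%MM = 0%MM :> 'X_{1..n} by apply/mnmP => j; rewrite !mnmE subnn.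
  by rewrite mpolyX0 scale1r mul1r.
by move=> j; rewrite eq_sym => /negbTE hj; rewrite mderivX mnm1E hj scale0r mul0r.
Qed.

Lemma mderBg g1 g2 f : mder g1 f - mder g2 f = mder (fun i => g1 i - g2 i) f.
Proof. by rewrite /mder -sumrB; apply: eq_bigr => i _; rewrite mulrBr. Qed.

Lemma mderMg r h f : mder (fun i => r * h i) f = r * mder h f.
Proof. by rewrite /mder mulr_sumr; apply: eq_bigr => i _; rewrite mulrCA. Qed.

Lemma mder_neq0 g : mder g <> (fun _ => 0) -> exists i, g i != 0.
Proof.
move=> hg; apply: NNPP => hall; apply: hg; apply: functional_extensionality => f.
rewrite /mder big1 // => i _.
have /eqP -> : g i == 0 by apply: NNPP => h; apply: hall; exists i; apply/negP.
by rewrite mulr0.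
Qed.

Lemma iter_mderD g k a b :
  iter k (mder g) (a + b) = iter k (mder g) a + iter k (mder g) b.
Proof. by elim: k => //= k ->; rewrite mderD. Qed.

Lemma iter_mder0 g k : iter k (mder g) 0 = 0.
Proof. by elim: k => //= k ->; rewrite mder0. Qed.

Lemma iter_mderZ g k c a : iter k (mder g) (c *: a) = c *: iter k (mder g) a.
Proof. by elim: k => //= k ->; rewrite mderZ. Qed.

Lemma derivation_eq_mder (D : P -> P) : is_derivation (fun c : K => c%:MP) D ->
  D = mder (fun i => D 'X_i).
Proof.
case=> hD hM hC; apply: functional_extensionality.
have D0 : D 0 = 0 by apply: (@addrI _ (D 0)); rewrite -hD !addr0.
have hX m : D 'X_[m] = mder (fun i => D 'X_i) 'X_[m].
  move: {2}(mdeg m) (erefl (mdeg m)) => k; elim/ltn_ind: k m => k IH m hm.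
  case: (pickP (fun i => (0 < m i)%N)) => [i hi|h]; last first.
    have -> : m = 0%MM by apply/mnmP => i; rewrite mnm0E; move: (h i) => /= /negbT; rewrite lt0n negbK => /eqP.
    by rewrite mpolyX0 -mpolyC1 hC mderC.
  have em : m = ((m - U_(i)) + U_(i))%MM.
    by rewrite submK //; apply/mnm_lepP => j; rewrite mnm1E; case: (i =P j) => [<-|].
  have hk : (mdeg (m - U_(i))%MM < k)%N by rewrite -hm {2}em mdegD mdeg1 addn1.
  by rewrite em mpolyXD hM mderM mderX (IH _ hk _ erefl).
have hZ c p : D (c *: p) = c *: D p.
  by rewrite -mul_mpolyC hM hC mul0r addr0 mul_mpolyC.
elim/mpolyind => [|c m p _ _ IH]; first by rewrite D0 mder0.
by rewrite hD mderD hZ mderZ hX IH.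
Qed.

End PolynomialDerivations.

Lemma seq_argmax (T : eqType) (s : seq T) (f : T -> real) : s != [::] ->
  exists2 x, x \in s & forall y, y \in s -> Rle (f y) (f x).
Proof.
elim: s => // a s IH _; case: (eqVneq s [::]) => [->|/IH [x xs hx]].
  by exists a; rewrite ?mem_seq1 // => y; rewrite mem_seq1 => /eqP ->; apply: Rle_refl.
case: (Rle_lt_dec (f a) (f x)) => h.
  by exists x; [rewrite inE xs orbT | move=> y; rewrite inE => /orP [/eqP ->|/hx]].
exists a; first by rewrite inE eqxx.
by move=> y; rewrite inE => /orP [/eqP ->|/hx]; [apply: Rle_refl | lra].
Qed.

Section LeadingDerivation.
Variables (K : fieldType) (n : nat) (w : 'I_n -> real).
Local Notation P := {mpoly K[n]}.
Local Notation wd := (wdeg w).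

Lemma exists_leading_degree (g : 'I_n -> P) i0 : g i0 != 0 ->
  exists t, (forall i, wle w (Rplus (w i) t) (g i)) /\
            exists i, wcomp w (Rplus (w i) t) (g i) != 0.
Proof.
move=> hg.
pose s := [seq (i, m) | i <- enum 'I_n, m <- msupp (g i)].
have s_mem i m : m \in msupp (g i) -> (i, m) \in s.
  by move=> hm; apply/allpairsPdep; exists i, m; rewrite mem_enum.
have hs : s != [::].
  have [m hm] : exists m, m \in msupp (g i0).
    by case: (msupp (g i0)) (msupp_eq0 (g i0)) => [|m r] /=;
      [rewrite (negbTE hg) | exists m; rewrite inE eqxx].
  by apply/eqP => e; have := s_mem _ _ hm; rewrite e.
have [[i m] /allpairsPdep [i' [m' [_ hm' [-> ->]]]] hmax] :=
  @seq_argmax _ s (fun x : 'I_n * 'X_{1..n} => Rminus (wd x.2) (w x.1)) hs.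
exists (Rminus (wd m') (w i')); split.
  move=> j u hu; have := hmax (j, u) (s_mem _ _ _); rewrite mcoeff_msupp => /(_ hu) /=; lra.
exists i'; apply/eqP => /(congr1 (mcoeff m')); rewrite mcoeff_wcomp mcoeff0 asbT; last by lra.
by apply/eqP; rewrite -mcoeff_msupp.
Qed.

Variables (g : 'I_n -> P) (t : real).
Hypothesis wle_g : forall i, wle w (Rplus (w i) t) (g i).
Let G i := wcomp w (Rplus (w i) t) (g i).

Lemma whom_mder_leading c f : whom w c f -> whom w (Rplus c t) (mder G f).
Proof.
move=> hf; apply: whom_sum => i.
rewrite (_ : Rplus c t = Rplus (Rminus c (w i)) (Rplus (w i) t)); last by lra.
by apply: whomM; [apply: whom_mderiv | apply: whom_wcomp].
Qed.

Lemma wlt_mder_subr_leading c f : whom w c f -> wlt w (Rplus c t) (mder g f - mder G f).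
Proof.
move=> hf; rewrite mderBg; apply: wlt_sum => i.
rewrite (_ : Rplus c t = Rplus (Rminus c (w i)) (Rplus (w i) t)); last by lra.
by apply: wle_wltM; [apply/whom_wle/whom_mderiv | apply: wlt_subr_wcomp].
Qed.

Lemma wlt_mder c h : wlt w c h -> wlt w (Rplus c t) (mder g h).
Proof.
move=> hh; apply: wlt_sum => i.
rewrite (_ : Rplus c t = Rplus (Rminus c (w i)) (Rplus (w i) t)); last by lra.
by apply: wlt_wleM; [apply: wlt_mderiv | apply: wle_g].
Qed.

Lemma iter_mder_leading c f k : whom w c f ->
  whom w (Rplus c (Rmult (INR k) t)) (iter k (mder G) f) /\
  wlt w (Rplus c (Rmult (INR k) t)) (iter k (mder g) f - iter k (mder G) f).
Proof.
move=> hf; elim: k => [|k [h1 h2]].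
  rewrite /= Rmult_0_l Rplus_0_r subrr; split; [exact: hf | exact: wlt0].
rewrite S_INR (_ : Rplus c _ = Rplus (Rplus c (Rmult (INR k) t)) t); last by lra.
split; first exact: whom_mder_leading.
rewrite /= -{1}(subrK (iter k (mder G) f) (iter k (mder g) f)) mderD -addrA addrC.
by apply: wltD; [apply: wlt_mder_subr_leading | apply: wlt_mder].
Qed.

Lemma iter_mder_leading_eq0 c f k :
  whom w c f -> iter k (mder g) f = 0 -> iter k (mder G) f = 0.
Proof.
move=> hf hk; have [h1 h2] := iter_mder_leading k hf.
by apply: (whom_wlt_eq0 h1); move: h2; rewrite hk sub0r => /wltN; rewrite opprK.
Qed.

Lemma mder_leading_lnd : locally_nilpotent (mder g) -> locally_nilpotent (mder G).
Proof.
move=> hlnd; elim/mpolyind => [|c m p _ _ [k2 hk2]]; first by exists 0%N.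
have [k1 hk1] := hlnd 'X_[m].
have hk1' := iter_mder_leading_eq0 (whomX w (m := m)) hk1.
exists (k1 + k2)%N; rewrite iter_mderD iter_mderZ.
by rewrite addnC iterD hk1' iter_mder0 scaler0 add0r addnC iterD hk2 iter_mder0.
Qed.

Lemma mder_leading_kernel c R : whom w c R -> mder g R = 0 -> mder G R = 0.
Proof. by move=> hR hgR; apply: (iter_mder_leading_eq0 (k := 1) hR). Qed.

End LeadingDerivation.

Section PowerFactor.
Variables (K : fieldType) (n : nat).
Local Notation P := {mpoly K[n]}.

Lemma msize_gt1 (R : P) : ~ (exists c, R = c%:MP) -> (1 < msize R)%N.
Proof. by move=> hR; case: leqP => // /msize1_polyC e; case: hR; exists R@_0. Qed.

Lemma msize_exprM_gt (R h : P) k : (1 < msize R)%N -> R ^+ k * h != 0 ->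
  (k < msize (R ^+ k * h))%N.
Proof.
move=> hR; elim: k h => [|k IH] h; first by rewrite expr0 mul1r lt0n msize_poly_eq0.
rewrite exprS -mulrA => hnz.
have nR : R != 0 by apply: contraNneq hnz => ->; rewrite mul0r.
have nX : R ^+ k * h != 0 by apply: contraNneq hnz => ->; rewrite mulr0.
rewrite msizeM //; have := IH _ nX.
by move: hR; move: (msize R) (msize (R ^+ k * h)) => a b; lia.
Qed.

(* The exponent [k] is bounded by [msize (G i1)], so a largest one exists. *)
Lemma exists_max_power_factor (R : P) (G : 'I_n -> P) i1 :
  (1 < msize R)%N -> G i1 != 0 ->
  exists k (H : 'I_n -> P), (forall i, G i = R ^+ k * H i) /\
    exists i, ~ exists q, H i = R * q.
Proof.
move=> hR hG.
pose divides k := asb (forall i, exists h, G i = R ^+ k * h).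
have ex0 : exists k, divides k.
  by exists 0%N; apply/asbP => i; exists (G i); rewrite expr0 mul1r.
have bound k : divides k -> (k <= msize (G i1))%N.
  move=> /asbP /(_ i1) [h hh]; apply: ltnW; rewrite hh.
  by apply: msize_exprM_gt; rewrite -?hh.
have [k /asbP hk kmax] := ex_maxnP ex0 bound.
have [H hH] := fin_all_exists hk.
exists k, H; split=> //; apply: NNPP => hall.
suff /kmax : divides k.+1 by rewrite ltnn.
apply/asbP => i; have [q hq] : exists q, H i = R * q.
  by apply: NNPP => h; apply: hall; exists i.
by exists q; rewrite hH hq exprSr mulrA.
Qed.

Variables (R : P) (k : nat) (G H : 'I_n -> P).
Hypotheses (R_neq0 : R != 0) (GE : forall i, G i = R ^+ k * H i).

Lemma mder_factor f : mder G f = R ^+ k * mder H f.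
Proof. by rewrite -mderMg; congr mder; apply: functional_extensionality. Qed.

Lemma mder_factor_kernel : mder G R = 0 -> mder H R = 0.
Proof. by rewrite mder_factor => /eqP; rewrite mulf_eq0 expf_eq0 (negbTE R_neq0) andbF => /eqP. Qed.

Lemma whom_mder_factor (w : 'I_n -> real) d t :
  whom w d R -> (forall c f, whom w c f -> whom w (Rplus c t) (mder G f)) ->
  forall c f, whom w c f -> whom w (Rplus c (Rminus t (Rmult (INR k) d))) (mder H f).
Proof.
move=> hR hG c f hf; have := hG _ _ hf; rewrite mder_factor => hRkH.
have := whom_cancel (whom_exprn (k := k) hR) (expf_neq0 k R_neq0) hRkH.
by rewrite (_ : Rminus _ _ = Rplus c (Rminus t (Rmult (INR k) d))) //; lra.
Qed.

Hypothesis HR : mder H R = 0.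

Lemma iter_mder_factor m f : iter m (mder G) f = R ^+ (k * m) * iter m (mder H) f.
Proof.
have HRk j : mder H (R ^+ j) = 0.
  elim: j => [|j IH]; first by rewrite expr0 -mpolyC1 mderC.
  by rewrite exprS mderM IH HR mulr0 mul0r addr0.
elim: m => [|m IH]; first by rewrite muln0 expr0 mul1r.
by rewrite /= IH mder_factor mderM HRk mul0r addr0 mulrA -exprD mulnS.
Qed.

Lemma mder_factor_lnd : locally_nilpotent (mder G) -> locally_nilpotent (mder H).
Proof.
move=> hG f; have [m hm] := hG f; exists m; move: hm.
by rewrite iter_mder_factor => /eqP; rewrite mulf_eq0 expf_eq0 (negbTE R_neq0) andbF => /eqP.
Qed.

End PowerFactor.

Section QuotientDerivation.
Variables (K : fieldType) (n : nat) (R : {mpoly K[n]}).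
Local Notation P := {mpoly K[n]}.
Hypothesis R_nunit : ~ is_unit R.

Lemma pidealP x : reflect (exists q, x = R * q) (x \in pideal R).
Proof.
rewrite unfold_in /= /pideal_pred asbF; first exact: asbP.
by move=> [q hq]; apply: R_nunit; exists q.
Qed.

Lemma qproj_eq (a b : P) : (qproj R a == qproj R b) = (a - b \in pideal R).
Proof. by rewrite /qproj -Quotient.idealrBE. Qed.

Lemma qprojD (a b : P) : qproj R (a + b) = qproj R a + qproj R b.
Proof. by rewrite /qproj rmorphD. Qed.
Lemma qprojM (a b : P) : qproj R (a * b) = qproj R a * qproj R b.
Proof. by rewrite /qproj rmorphM. Qed.
Lemma qproj0 : qproj R 0 = 0.
Proof. by rewrite /qproj rmorph0. Qed.
Lemma qproj_repr (a : quot_by R) : qproj R (repr a) = a.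
Proof. by rewrite /qproj reprK. Qed.

Variables (H : 'I_n -> P).
Hypothesis HR : mder H R = 0.

Definition qder (a : quot_by R) : quot_by R := qproj R (mder H (repr a)).

(* [mder H] preserves the ideal [(R)] because it kills [R]. *)
Lemma qder_qproj p : qder (qproj R p) = qproj R (mder H p).
Proof.
apply/eqP; rewrite qproj_eq.
have /eqP : qproj R (repr (qproj R p)) = qproj R p by rewrite qproj_repr.
rewrite qproj_eq => /pidealP [q hq]; apply/pidealP; exists (mder H q).
by rewrite -mderB hq mderM HR mul0r addr0.
Qed.

Lemma qder_derivation : is_derivation (fun c : K => qproj R c%:MP) qder.
Proof.
split.
- by move=> a b; rewrite -(qproj_repr a) -(qproj_repr b) -qprojD !qder_qproj mderD qprojD.
- by move=> a b; rewrite -(qproj_repr a) -(qproj_repr b) -qprojM !qder_qproj mderM qprojD !qprojM.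
- by move=> c; rewrite qder_qproj mderC qproj0.
Qed.

Lemma qder_lnd : locally_nilpotent (mder H) -> locally_nilpotent qder.
Proof.
move=> hH a; rewrite -(qproj_repr a); have [m hm] := hH (repr a); exists m.
have -> p : iter m qder (qproj R p) = qproj R (iter m (mder H) p).
  by elim: m {hm} => //= m ->; rewrite qder_qproj.
by rewrite hm qproj0.
Qed.

Lemma qder_neq0 i : ~ (exists q, H i = R * q) -> qder <> (fun _ => 0).
Proof.
move=> hHi hd; apply: hHi; apply/pidealP.
have /eqP := qder_qproj 'X_i; rewrite hd mderX eq_sym -qproj0 qproj_eq.
by rewrite subr0.
Qed.

Lemma qder_whomog (w : 'I_n -> real) e :
  (forall c f, whom w c f -> whom w (Rplus c e) (mder H f)) -> whomog_qder w qder.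
Proof.
move=> hH; exists e => d a [p [hp <-]]; exists (mder H p).
by rewrite qder_qproj; split=> //; apply/whomogP/hH/whomogP.
Qed.

End QuotientDerivation.

Theorem lemma8 (K : closedFieldType) (hK0 : [pchar K] =i pred0)
  (n : nat) (w : 'I_n -> real) (hw : positive_weights w)
  (R : {mpoly K[n]})
  (hRnc : ~ exists c : K, R = c%:MP)
  (hRirr : irreducible_elt R)
  (hRhom : exists d : real, whomog w d R)
  (hD : exists D : {mpoly K[n]} -> {mpoly K[n]},
      [/\ is_derivation (fun c : K => c%:MP) D, locally_nilpotent D,
          D <> (fun _ => 0) & D R = 0]) :
  exists delta : quot_by R -> quot_by R,
    [/\ is_derivation (fun c : K => qproj R c%:MP) delta,
        locally_nilpotent delta,
        delta <> (fun _ => 0)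
      & whomog_qder w delta].
Proof.
case: hD => D [/derivation_eq_mder DE D_lnd D_neq0 DR].
rewrite {}DE in D_lnd D_neq0 DR; set g := fun i => D 'X_i in D_lnd D_neq0 DR.
have [i0 g_i0] := mder_neq0 D_neq0.
have [t [wle_g [i1 G_i1]]] := exists_leading_degree w g_i0.
have [dR /whomogP hR] := hRhom.
case: hRirr => R_neq0 R_nunit _.
have [k [H [GE [i2 H_i2]]]] := exists_max_power_factor
  (G := fun i => wcomp w (Rplus (w i) t) (g i)) (msize_gt1 hRnc) G_i1.
have HR := mder_factor_kernel R_neq0 GE (mder_leading_kernel wle_g hR DR).
exists (qder (R := R) H); split.
- exact: qder_derivation.
- exact/qder_lnd/(mder_factor_lnd R_neq0 GE HR)/mder_leading_lnd.
- exact: qder_neq0 H_i2.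
- exact/qder_whomog/(whom_mder_factor R_neq0 GE hR)/whom_mder_leading.
Qed.
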